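(* The pair of graded graphs $(\mathbf{Comp}_\bullet,\mathbf{U},\mathbf{V})$ is $2$-dual, that is $\mathbf{V}^\star\mathbf{U}-\mathbf{U}\mathbf{V}^\star=2I$, where $I$ is the identity map.
   Context: $\mathbb{K}$ is a field of characteristic zero. $\mathbf{Comp}$ is the set of all nonempty words over $\{0,1\}$ beginning with $0$ (the elements of the operad of integer compositions), graded by rank $|u|-1$; $\mathbf{Comp}_\bullet$ denotes this graded set. The prefix graph and twisted prefix graph of this operad are given by the linear maps on $\mathbb{K}\langle\mathbf{Comp}\rangle$ (basis: these words) $$\mathbf{U}(u)=\sum_{i\in[|u|]}\big(u_1\cdots u_i\,0\,u_{i+1}\cdots u_{|u|}+u_1\cdots u_i\,1\,u_{i+1}\cdots u_{|u|}\big),\qquad \mathbf{V}(u)=u0+u1.$$ $\mathbf{V}^\star$ is the adjoint of $\mathbf{V}$ for the scalar product making the words orthonormal. *)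

From HB Require Import structures.
From mathcomp Require Import all_boot all_order all_algebra.
Set Implicit Arguments. Unset Strict Implicit. Unset Printing Implicit Defensive.
Import Order.TTheory GRing.Theory Num.Theory.
Local Open Scope ring_scope.

(* Words over {0,1}: the letter 0 is [false], the letter 1 is [true]. *)
Definition word := seq bool.

Definition is_comp (u : word) : bool :=
  if u is b :: _ then ~~ b else false.

Definition comp_of_size (n : nat) : seq word :=
  if n is m.+1 then [seq false :: tval t | t <- enum {: m.-tuple bool}] else [::].

(* Elements of K<Comp>: finite formal linear combinations of words,
   represented by a list of (coefficient, word) pairs; two such lists denote
   the same vector iff they have the same coefficients [coef]. *)
Definition vec (K : nzRingType) := seq (K * word).

Definition coef (K : nzRingType) (v : vec K) (w : word) : K :=
  \sum_(p <- v) (p.2 == w)%:R * p.1.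

Definition lin (K : nzRingType) (f : word -> vec K) (v : vec K) : vec K :=
  flatten [seq [seq (p.1 * q.1, q.2) | q <- f p.2] | p <- v].

Definition ins (i : nat) (b : bool) (u : word) : word :=
  take i u ++ b :: drop i u.

(* U(u) = sum_{i in [|u|]} (u_1..u_i 0 u_{i+1}..  +  u_1..u_i 1 u_{i+1}..) *)
Definition U_basis (K : nzRingType) (u : word) : vec K :=
  [seq (1, ins i b u) | i <- iota 1 (size u), b <- [:: false; true]].

Definition V_basis (K : nzRingType) (u : word) : vec K :=
  [:: (1, rcons u false); (1, rcons u true)].

(* Adjoint of V for the scalar product making words orthonormal:
   V*(u) = sum_{w in Comp} <V(w), u> w.  Only words w with |w| <= |u| can
   satisfy <V(w),u> <> 0 (V increases length), so the sum is restricted to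
   the (finitely many) elements of Comp of length 1..|u|. *)
Definition Vstar_basis (K : nzRingType) (u : word) : vec K :=
  [seq (coef (V_basis K w) u, w) | n <- iota 1 (size u), w <- comp_of_size n].

Definition Uop (K : nzRingType) : vec K -> vec K := lin (@U_basis K).
Definition Vop (K : nzRingType) : vec K -> vec K := lin (@V_basis K).
Definition Vstar (K : nzRingType) : vec K -> vec K := lin (@Vstar_basis K).

From HB Require Import structures.
From mathcomp Require Import all_boot all_order all_algebra.
From mathcomp Require Import zify.
Import GRing.Theory.
Local Open Scope ring_scope.

(* In coordinates, (V* x)(w) = [w in Comp] (x(w0) + x(w1)) and
   (U x)(w) = sum_(1 <= i < |w|) x(w with its letter i deleted), letters being
   counted from 0, so that the first letter is never deleted.  Hence for w in
   Comp both (V* U x)(w) and (U V* x)(w) sum x over the words obtained from w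
   by appending a letter b and deleting a letter other than the first; V* U
   may moreover delete the appended letter itself, which gives back x(w) once
   for each b. *)

Definition del (i : nat) (w : word) : word := take i w ++ drop i.+1 w.

Lemma size_ins i b u : size (ins i b u) = (size u).+1.
Proof. rewrite /ins size_cat /= size_take_min size_drop; lia. Qed.

Lemma size_del i w : (i < size w)%N -> size (del i w) = (size w).-1.
Proof. rewrite /del size_cat size_take_min size_drop; lia. Qed.

Lemma del_ins i b u : (i <= size u)%N -> del i (ins i b u) = u.
Proof.
move=> le_iu; rewrite /del /ins.
have size_take_i := size_takel le_iu.
by rewrite take_size_cat // drop_cat size_take_i ltnNge leqnSn subSnn /= drop0 cat_take_drop.
Qed.

Lemma nth_ins i b u : (i <= size u)%N -> nth false (ins i b u) i = b.
Proof. by move=> le_iu; rewrite /ins nth_cat size_take_min (minn_idPl le_iu) ltnn subnn. Qed.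

Lemma ins_del i w : (i < size w)%N -> ins i (nth false w i) (del i w) = w.
Proof.
move=> lt_iw; rewrite /ins /del.
have size_take_i := size_takel (ltnW lt_iw).
by rewrite take_size_cat // drop_size_cat // -drop_nth // cat_take_drop.
Qed.

Lemma ins_eqE i b u w : (i <= size u)%N -> (i < size w)%N ->
  (ins i b u == w) = (del i w == u) && (nth false w i == b).
Proof.
move=> le_iu lt_iw; apply/eqP/andP => [<-|[/eqP <- /eqP <-]].
  by rewrite del_ins // nth_ins.
exact: ins_del.
Qed.

Lemma del_rcons i w b : (i < size w)%N -> del i (rcons w b) = rcons (del i w) b.
Proof.
move=> lt_iw; rewrite /del drop_rcons // -cats1 takel_cat ?rcons_cat //.
exact: ltnW.
Qed.

Lemma del_last w b : del (size w) (rcons w b) = w.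
Proof. by rewrite /del -cats1 take_size_cat // drop_oversize ?cats0 // size_cat addn1. Qed.

Lemma is_comp_del i w : (0 < i)%N -> is_comp (del i w) = is_comp w.
Proof. by case: i => // i _; case: w. Qed.

Section Coefficients.
Variable K : nzRingType.

Lemma sum_pred1_uniq (T : eqType) (s : seq T) (x0 : T) (F : T -> K) :
  uniq s -> \sum_(x <- s) (x == x0)%:R * F x = (x0 \in s)%:R * F x0.
Proof.
elim: s => [|y s IHs] /=; first by rewrite big_nil mul0r.
case/andP => /negbTE s'y uniq_s; rewrite big_cons IHs // in_cons.
by case: eqVneq => [<-|_]; rewrite ?s'y ?mul0r ?mul1r ?add0r ?addr0.
Qed.

Lemma coef_flatten (vs : seq (vec K)) w :
  coef (flatten vs) w = \sum_(v <- vs) coef v w.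
Proof. exact: big_flatten. Qed.

Lemma coef_map (T : Type) (s : seq T) (a : T -> K) (b : T -> word) w :
  coef [seq (a x, b x) | x <- s] w = \sum_(x <- s) (b x == w)%:R * a x.
Proof. exact: big_map. Qed.

Lemma coef_lin (f : word -> vec K) (v : vec K) w :
  coef (lin f v) w = \sum_(p <- v) p.1 * coef (f p.2) w.
Proof.
rewrite /lin coef_flatten big_map; apply: eq_bigr => p _.
rewrite coef_map /coef big_distrr; apply: eq_bigr => q _.
by rewrite /= mulrA -commr_nat mulrA.
Qed.

Lemma coef_comp_support (v : vec K) w :
  all (fun p => is_comp p.2) v -> (is_comp w)%:R * coef v w = coef v w.
Proof.
move=> /allP supp_v; case: (boolP (is_comp w)) => [_|w'comp]; first exact: mul1r.
rewrite mul0r /coef big1_seq // => p /andP[_ /supp_v comp_p].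
case: eqP => [eq_p|_]; last exact: mul0r.
by rewrite eq_p (negbTE w'comp) in comp_p.
Qed.

Lemma coef_U_basis (u w : word) :
  coef (U_basis K u) w = \sum_(1 <= i < size w) (del i w == u)%:R.
Proof.
rewrite /U_basis coef_flatten big_map.
have [size_w|size_w] := eqVneq (size w) (size u).+1.
  rewrite size_w /index_iota subn1 /=; apply: eq_big_seq => i.
  rewrite mem_iota add1n ltnS => /andP[_ le_iu].
  rewrite /coef big_cons big_seq1 !mulr1 !ins_eqE ?size_w //.
  by case: (del i w == u); case: (nth false w i); rewrite ?addr0 ?add0r.
rewrite big1_seq => [|i _]; last first.
  rewrite coef_map big1_seq // => b _; case: eqP; rewrite ?mul0r //.
  by move=> ins_w; rewrite -ins_w size_ins eqxx in size_w.
rewrite big1_seq // => i /andP[_]; rewrite mem_index_iota => /andP[_ lt_iw].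
case: eqP => // del_w.
by rewrite -del_w size_del // (ltn_predK lt_iw) eqxx in size_w.
Qed.

Lemma coef_Uop (v : vec K) w :
  coef (Uop v) w = \sum_(1 <= i < size w) coef v (del i w).
Proof.
rewrite /Uop coef_lin.
under eq_bigr do rewrite coef_U_basis big_distrr.
rewrite exchange_big; apply: eq_bigr => i _; apply: eq_bigr => p _.
by rewrite -commr_nat eq_sym.
Qed.

Lemma coef_V_basis (u w : word) :
  coef (V_basis K w) u = (rcons w false == u)%:R + (rcons w true == u)%:R.
Proof. by rewrite /coef !big_cons big_nil !mulr1 addr0. Qed.

Lemma coef_V_basis_small (u w : word) :
  (size u <= size w)%N -> coef (V_basis K w) u = 0.
Proof.
move=> le_uw; have rcons_neq b : (rcons w b == u) = false.
  by apply/negbTE/eqP => eq_u; rewrite -eq_u size_rcons ltnn in le_uw.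
by rewrite coef_V_basis !rcons_neq addr0.
Qed.

Lemma mem_comp_of_size n w :
  (w \in comp_of_size n) = is_comp w && (size w == n).
Proof.
case: n => [|n] /=; first by case: w => [|[] w].
apply/mapP/idP => [[t _ ->]|]; first by rewrite /= size_tuple.
case: w => [|[] w] //= /eqP[size_w].
by exists (Tuple (introT eqP size_w)); rewrite ?mem_enum.
Qed.

Lemma uniq_comp_of_size n : uniq (comp_of_size n).
Proof. by case: n => //= n; rewrite map_inj_uniq ?enum_uniq // => t1 t2 [/val_inj]. Qed.

Lemma coef_Vstar_basis (u w : word) :
  coef (Vstar_basis K u) w = (is_comp w)%:R * coef (V_basis K w) u.
Proof.
rewrite /Vstar_basis coef_flatten big_map.
under eq_bigr => n _ do rewrite coef_map sum_pred1_uniq ?uniq_comp_of_size //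
  mem_comp_of_size eq_sym andbC -mulnb natrM -mulrA.
rewrite sum_pred1_uniq ?iota_uniq // mem_iota add1n ltnS.
case: w => [|b w]; first by rewrite !mul0r.
have [_|lt_uw] := leqP (size (b :: w)) (size u); first by rewrite andbT mul1r.
by rewrite andbF mul0r coef_V_basis_small ?mulr0 // ltnW.
Qed.

Lemma coef_Vstar (v : vec K) w :
  coef (Vstar v) w = (is_comp w)%:R * (coef v (rcons w false) + coef v (rcons w true)).
Proof.
rewrite /Vstar coef_lin.
under eq_bigr do rewrite coef_Vstar_basis coef_V_basis.
rewrite /coef -big_split big_distrr; apply: eq_bigr => p _ /=.
by rewrite ![p.2 == _]eq_sym -mulrDl -natrD mulrA (commr_nat p.1) -mulrA commr_nat.
Qed.

Lemma coef_Uop_rcons (v : vec K) w b : (0 < size w)%N ->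
  coef (Uop v) (rcons w b) =
    \sum_(1 <= i < size w) coef v (rcons (del i w) b) + coef v w.
Proof.
move=> w_gt0; rewrite coef_Uop size_rcons big_nat_recr // del_last.
by congr (_ + _); apply: eq_big_nat => i /andP[_ lt_iw]; rewrite del_rcons.
Qed.

Lemma coef_Vstar_Uop (v : vec K) w :
  coef (Vstar (Uop v)) w = coef (Uop (Vstar v)) w + ((is_comp w)%:R * coef v w) *+ 2.
Proof.
rewrite coef_Vstar (coef_Uop (Vstar v)).
case: w => [|b w]; first by rewrite !mul0r big_geq ?mul0rn ?addr0.
under eq_big_nat => i /andP[i_gt0 _] do rewrite coef_Vstar is_comp_del //.
rewrite -big_distrr big_split !coef_Uop_rcons //=.
by rewrite addrACA mulrDr -mulr2n mulrnAr.
Qed.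

End Coefficients.

Theorem proposition4p8 (K : fieldType) (charK0 : [pchar K] =i pred0)
    (v : vec K) :
  all (fun p => is_comp p.2) v ->
  forall w : word,
    coef (Vstar (Uop v)) w - coef (Uop (Vstar v)) w = 2 * coef v w.
Proof.
move=> supp_v w.
by rewrite coef_Vstar_Uop addrC addKr coef_comp_support // mulr_natl.
Qed.
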